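(* Let $X$ be the compact symplectic toric manifold determined by a moment polytope $P\subset\mathbb{R}^n$. If the toric fiber $L(\mathbf{u})$ over an interior point $\mathbf{u}$ of $P$ is bulk-balanced, then $L(\mathbf{u})$ is strongly bulk-balanced.
   Context: $P=\bigcap_{j=1}^m\{\mathbf{u}:\ell_j(\mathbf{u})\ge0\}$, $\ell_j(\mathbf{u})=\langle\mathbf{u},\mathbf{v}_j\rangle-\lambda_j$, with $\mathbf{v}_j\in\mathbb{Z}^n$ primitive inward facet normals and non-redundant half-spaces. $L(\mathbf{u})$ is the Lagrangian torus fiber over $\mathbf{u}$. Leading term equations: for $\mathbf{u}\in\mathrm{Int}(P)$ let $S_1<S_2<\cdots$ be the distinct values of $\ell_j(\mathbf{u})$, $I_l=\{j:\ell_j(\mathbf{u})=S_l\}$, $A_l^\perp=\mathrm{span}_\mathbb{R}\{\mathbf{v}_j: j\in I_1\cup\dots\cup I_l\}$, $d_l=\dim A^\perp_l-\dim A^\perp_{l-1}$, $\kappa$ minimal with $A^\perp_\kappa=\mathbb{R}^n$. Choose $e^*_{r,s}\in\mathbb{Q}^n$ ($1\le r\le\kappa$, $1\le s\le d_r$) so that $\{e^*_{r,s}:r\le l\}$ is a $\mathbb{Q}$-basis of $A_l^\perp\cap\mathbb{Q}^n$ for each $l$ and each $\mathbf{v}_j\in\bigoplus\mathbb{Z}e^*_{r,s}$; write $\mathbf{y}^{\mathbf{v}_j}=\prod y_{r,s}^{v_j^{r,s}}$ where $\mathbf{v}_j=\sum v_j^{r,s}e^*_{r,s}$. For $c\in(\mathbb{C}^*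 )^m$ let $F_l^c=\sum_{j\in I_l}c_j\mathbf{y}^{\mathbf{v}_j}$; the generalized leading term equation is $y_{l,s}\partial F^c_l/\partial y_{l,s}=0$ ($1\le l\le\kappa$, $1\le s\le d_l$), and for $c=(1,\dots,1)$ it is called the leading term equation at $\mathbf{u}$ of $P$. (Solvability in $(\mathbb{C}^* )^n$ is independent of the choice of $e^*_{r,s}$.) $L(\mathbf{u})$ is strongly bulk-balanced if for some $c\in(\mathbb{C}^* )^m$ the generalized leading term equation at $\mathbf{u}$ of $P$ has a solution in $(\mathbb{C}^* )^n$. $L(\mathbf{u})$ is bulk-balanced if there is a sequence of triples $(\omega^{(i)},P^{(i)},\mathbf{u}^{(i)})$ such that: each $P^{(i)}$ is a polytope with the same normal fan as $P$ and $\omega^{(i)}$ the corresponding torus-invariant symplectic form on the same complex toric manifold, with $\omega^{(i)}\to\omega$; $P^{(i)}\to P$ in Hausdorff distance; $\mathbf{u}^{(i)}\in\mathrm{Int}(P^{(i)})$, $\mathbf{u}^{(i)}\to\mathbf{u}$; and for each $i$ the leading term equation at $\mathbf{u}^{(i)}$ of $P^{(i)}$ has a solution in $(\mathbb{C}^* )^n$. *)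

From HB Require Import structures.
From mathcomp Require Import all_boot all_order all_algebra.
From mathcomp Require Import reals.
From mathcomp Require Import complex.
Set Implicit Arguments.
Unset Strict Implicit.
Unset Printing Implicit Defensive.
Import Order.TTheory GRing.Theory Num.Theory.
Local Open Scope ring_scope.

Section Toric.
Variable R : realType.
Variables (n m : nat).

Definition ell (v : 'I_m -> 'I_n -> int) (lam : 'I_m -> R) (j : 'I_m)
  (u : 'I_n -> R) : R :=
  \sum_(k < n) u k * (v j k)%:~R - lam j.

Definition inP v lam (u : 'I_n -> R) := forall j, 0 <= ell v lam j u.
Definition inInt v lam (u : 'I_n -> R) := forall j, 0 < ell v lam j u.

Definition primitive_normals (v : 'I_m -> 'I_n -> int) :=
  forall j (d : int), (forall k, (d %| v j k)%Z) -> d = 1 \/ d = -1.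

Definition nonredundant v (lam : 'I_m -> R) :=
  forall j, exists u : 'I_n -> R,
    (forall i, i != j -> 0 <= ell v lam i u) /\ ell v lam j u < 0.

Definition bounded_P v (lam : 'I_m -> R) :=
  exists M : R, forall u, inP v lam u -> forall k, `|u k| <= M.

Definition is_polytope v (lam : 'I_m -> R) :=
  [/\ primitive_normals v, nonredundant v lam, bounded_P v lam
    & exists u, inInt v lam u].

Definition vmat (v : 'I_m -> 'I_n -> int) : 'M[rat]_(m, n) :=
  \matrix_(j, k) (v j k)%:~R.

Definition active_mat v lam (u : 'I_n -> R) : 'M[rat]_(m, n) :=
  \matrix_(j, k) (if ell v lam j u == 0 then (v j k)%:~R else 0).

(* Delzant condition: at each vertex exactly n facets meet and their normals
   form a Z-basis of Z^n *)
Definition delzant v (lam : 'I_m -> R) :=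
  forall u, inP v lam u -> \rank (active_mat v lam u) = n ->
    exists f : 'I_n -> 'I_m,
      [/\ injective f,
          (forall j, ell v lam j u = 0 <-> exists a, f a = j)
        & \det (\matrix_(a, b) v (f a) b) = 1 \/
          \det (\matrix_(a, b) v (f a) b) = -1].

Definition moment_polytope v (lam : 'I_m -> R) :=
  is_polytope v lam /\ delzant v lam.

(* Generalized leading term equation at u of P with coefficients c has a
   solution in (C^* )^n.  The adapted basis {e*_{r,s}} is encoded as the rows
   e_k (k : 'I_n) of a rational matrix e together with the value
   sigma k = S_r of the level r of e_k; the conditions say that for each
   level value t = S_l, the e_k with sigma k <= t form a Q-basis of
   A_l^perp /\ Q^n = Q-span {v_j : ell_j(u) <= t}; a j k are the (integer)
   coordinates of v_j in this basis, and the equation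
   y_{l,s} d/dy_{l,s} F_l^c = 0 for the basis vector k reads
   sum_{j in I_l} c_j a_{jk} y^{v_j} = 0. *)
Definition lte_solvable v lam (u : 'I_n -> R) (c : 'I_m -> R[i]) :=
  exists (sigma : 'I_n -> R) (e : 'M[rat]_n) (a : 'I_m -> 'I_n -> int)
         (y : 'I_n -> R[i]),
  [/\ forall k, exists j, sigma k = ell v lam j u,
      forall j0, let t := ell v lam j0 u in
        \rank (\matrix_(k < n) (if (sigma k <= t)%R then row k e else 0))
          = #|[set k : 'I_n | sigma k <= t]|
        /\ (\matrix_(k < n) (if (sigma k <= t)%R then row k e else 0) ==
            \matrix_(j < m) (if (ell v lam j u <= t)%R then row j (vmat v) else 0))%MS,
      forall j, row j (vmat v) = \sum_(k < n) (a j k)%:~R *: row k e,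
      forall k, y k != 0
    & forall k,
        \sum_(j < m | ell v lam j u == sigma k)
           c j * (a j k)%:~R * \prod_(k' < n) (y k' ^ a j k') = 0].

Definition strongly_bulk_balanced v lam (u : 'I_n -> R) :=
  exists c : 'I_m -> R[i], (forall j, c j != 0) /\ lte_solvable v lam u c.

Definition same_normal_fan v (lam lam' : 'I_m -> R) :=
  forall I : {set 'I_m},
    (exists u, inP v lam u /\ forall j, j \in I -> ell v lam j u = 0) <->
    (exists u, inP v lam' u /\ forall j, j \in I -> ell v lam' j u = 0).

Definition hausdorff_cvg v (lams : nat -> 'I_m -> R) (lam : 'I_m -> R) :=
  forall eps : R, 0 < eps -> exists N : nat, forall i : nat, (N <= i)%N ->
    (forall x, inP v (lams i) x ->
       exists y, inP v lam y /\ forall k, `|x k - y k| < eps) /\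
    (forall y, inP v lam y ->
       exists x, inP v (lams i) x /\ forall k, `|x k - y k| < eps).

Definition bulk_balanced v lam (u : 'I_n -> R) :=
  exists (lams : nat -> 'I_m -> R) (us : nat -> 'I_n -> R),
  [/\ forall i, is_polytope v (lams i) /\ same_normal_fan v lam (lams i),
      (* omega^(i) -> omega : the parameters of the symplectic forms converge *)
      forall j (eps : R), 0 < eps -> exists N : nat, forall i : nat, (N <= i)%N ->
        `|lams i j - lam j| < eps,
      hausdorff_cvg v lams lam,
      forall k (eps : R), 0 < eps -> exists N : nat, forall i : nat, (N <= i)%N ->
        `|us i k - u k| < eps
    & forall i, inInt v (lams i) (us i) /\ lte_solvable v (lams i) (us i) (fun _ => 1)].

End Toric.

(* For i large, strict inequalities between the values ell_j(u) persist at
   ell_j(u^(i)) for the i-th polytope, so every level of u is a union of levels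
   of u^(i) and an adapted basis at u^(i) is still adapted at u.  Writing
   z_j = c_j y^(v_j), the generalized leading term equations at u are linear
   in z, with coefficients the coordinates a_jk of v_j in that basis.  The
   coordinate matrix is block triangular for the levels of u^(i), with onto
   diagonal blocks.  So z can be chosen one level of u^(i) at a time, from the
   top down: the diagonal block cancels what the higher levels contribute, and
   adding a multiple of (y^(v_j))_j, which solves the equations of that level
   by the leading term equation at u^(i), makes all z_j nonzero. *)

From HB Require Import structures.
From mathcomp Require Import all_boot all_order all_algebra.
From mathcomp Require Import reals complex.
From mathcomp Require Import ring lra.
Set Implicit Arguments.
Unset Strict Implicit.
Unset Printing Implicit Defensive.
Import Order.TTheory GRing.Theory Num.Theory.
Local Open Scope ring_scope.

Definition eventually (P : nat -> Prop) := exists N, forall i, (N <= i)%N -> P i.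

Lemma eventually_and P Q :
  eventually P -> eventually Q -> eventually (fun i => P i /\ Q i).
Proof.
move=> [N1 h1] [N2 h2]; exists (maxn N1 N2) => i hi; split.
  by apply: h1; apply: leq_trans hi; apply: leq_maxl.
by apply: h2; apply: leq_trans hi; apply: leq_maxr.
Qed.

Lemma eventually_mono (P Q : nat -> Prop) :
  (forall i, P i -> Q i) -> eventually P -> eventually Q.
Proof. by move=> PQ [N hN]; exists N => i /hN /PQ. Qed.

Lemma eventually_forall (T : finType) (P : T -> nat -> Prop) :
  (forall x, eventually (P x)) -> eventually (fun i => forall x, P x i).
Proof.
move=> evP; suff /(_ (enum T)) : forall s : seq T,
    eventually (fun i => forall x, x \in s -> P x i).
  by apply: eventually_mono => i Pi x; apply: Pi; rewrite mem_enum.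
elim => [|y s IH]; first by exists 0%N.
apply: eventually_mono (eventually_and (evP y) IH) => i [Pyi Psi] x.
by rewrite inE => /orP[/eqP ->|/Psi].
Qed.

Section EllConvergence.
Variables (R : realType) (n m : nat) (v : 'I_m -> 'I_n -> int).
Variables (lam : 'I_m -> R) (u : 'I_n -> R).
Variables (lams : nat -> 'I_m -> R) (us : nat -> 'I_n -> R).
Hypothesis lams_cvg : forall j (eps : R), 0 < eps ->
  eventually (fun i => `|lams i j - lam j| < eps).
Hypothesis us_cvg : forall k (eps : R), 0 < eps ->
  eventually (fun i => `|us i k - u k| < eps).

Lemma ell_cvg j (eps : R) : 0 < eps ->
  eventually (fun i => `|ell v (lams i) j (us i) - ell v lam j u| < eps).
Proof.
move=> eps_gt0; pose M := 1 + \sum_k `|(v j k)%:~R : R|.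
have M_gt0 : 0 < M by rewrite ltr_pwDl // sumr_ge0.
pose d := eps / 2 / M.
have d_gt0 : 0 < d by rewrite !divr_gt0.
have us_near : eventually (fun i => forall k, `|us i k - u k| < d).
  by apply: eventually_forall => k; apply: us_cvg.
have lams_near : eventually (fun i => `|lams i j - lam j| < eps / 2).
  by apply: lams_cvg; rewrite divr_gt0.
apply: eventually_mono (eventually_and us_near lams_near) => i [hu hl].
have -> : ell v (lams i) j (us i) - ell v lam j u =
    \sum_k (us i k - u k) * (v j k)%:~R - (lams i j - lam j).
  rewrite /ell; under [X in _ = X - _]eq_bigr do rewrite mulrBl.
  rewrite sumrB; ring.
apply: le_lt_trans (ler_normB _ _) _; rewrite [eps](splitr eps) ler_ltD //.
apply: le_trans (ler_norm_sum _ _ _) _.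
apply: (@le_trans _ _ (\sum_k d * `|(v j k)%:~R : R|)).
  by apply: ler_sum => k _; rewrite normrM ler_wpM2r // ltW.
have <- : d * M = eps / 2 by rewrite /d mulfVK // gt_eqF.
by rewrite -mulr_sumr ler_wpM2l ?(ltW d_gt0) // /M lerDr.
Qed.

Lemma eventually_ell_order : eventually (fun i => forall j j',
  ell v lam j u < ell v lam j' u -> ell v (lams i) j (us i) < ell v (lams i) j' (us i)).
Proof.
suff : eventually (fun i => forall p : 'I_m * 'I_m,
    ell v lam p.1 u < ell v lam p.2 u ->
    ell v (lams i) p.1 (us i) < ell v (lams i) p.2 (us i)).
  by apply: eventually_mono => i ord_i j j'; apply: (ord_i (j, j')).
apply: eventually_forall => -[j j'] /=.
have [lt_jj'|_] := ltP (ell v lam j u) (ell v lam j' u); last by exists 0%N.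
pose eps := (ell v lam j' u - ell v lam j u) / 2.
have eps_gt0 : 0 < eps by rewrite divr_gt0 // subr_gt0.
apply: eventually_mono (eventually_and (ell_cvg j eps_gt0) (ell_cvg j' eps_gt0)).
by move=> i []; rewrite !ltr_norml /eps => /andP[_ ?] /andP[? _] _; lra.
Qed.

End EllConvergence.

Definition mask_mx p (P : pred 'I_p) : 'M[rat]_p :=
  diag_mx (\row_i if P i then 1 else 0).

Section AdaptedBasis.
Variables (R : realFieldType) (m n : nat).
Variables (f : 'I_m -> R) (sigma : 'I_n -> R) (e : 'M[rat]_n).
Variables (a : 'I_m -> 'I_n -> int) (V : 'M[rat]_(m, n)).
Hypothesis sigma_level : forall k, exists j, sigma k = f j.
Hypothesis adapted_span : forall j0, let t := f j0 in
  \rank (\matrix_(k < n) (if (sigma k <= t)%R then row k e else 0))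
    = #|[set k : 'I_n | sigma k <= t]|
  /\ (\matrix_(k < n) (if (sigma k <= t)%R then row k e else 0) ==
      \matrix_(j < m) (if (f j <= t)%R then row j V else 0))%MS.
Hypothesis adapted_coords : forall j,
  row j V = \sum_(k < n) (a j k)%:~R *: row k e.

Definition coord_mx : 'M[rat]_(m, n) := \matrix_(j, k) (a j k)%:~R.

Lemma adapted_rows_mask t :
  \matrix_(k < n) (if (sigma k <= t)%R then row k e else 0) =
  mask_mx (fun k => sigma k <= t) *m e.
Proof.
apply/matrixP => k l; rewrite mul_diag_mx !mxE.
by case: ifP; rewrite ?mxE ?mul1r ?mul0r.
Qed.

Lemma coord_mxP : V = coord_mx *m e.
Proof.
apply/row_matrixP => j; rewrite row_mul adapted_coords mulmx_sum_row.
by apply: eq_bigr => k _; rewrite !mxE.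
Qed.

Lemma adapted_basis_row_free (j0 : 'I_m) : row_free e.
Proof.
pose jmax := [arg max_(j > j0) f j]%O.
have le_jmax j : f j <= f jmax by rewrite /jmax; case: arg_maxP => // i _; apply.
have all_below k : sigma k <= f jmax by have [j ->] := sigma_level k.
have [rank_e _] := adapted_span jmax.
have -> : e = \matrix_(k < n) (if (sigma k <= f jmax)%R then row k e else 0).
  by apply/row_matrixP => k; rewrite rowK all_below.
apply/eqP; rewrite rank_e -[n in _ = n]card_ord -cardsT.
by apply: eq_card => k; rewrite !inE all_below.
Qed.

Lemma adapted_coord_eq0 j k : f j < sigma k -> a j k = 0.
Proof.
move=> lt_fs; have [_ /andP[_ spanV]] := adapted_span j.
have : (row j V <= \matrix_(k < n) (if (sigma k <= f j)%R then row k e else 0))%MS.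
  apply: submx_trans spanV.
  have -> : row j V = row j (\matrix_(i < m) (if (f i <= f j)%R then row i V else 0)).
    by rewrite rowK lexx.
  exact: row_sub.
case/submxP => x; rewrite adapted_rows_mask mulmxA coord_mxP row_mul.
move/(row_free_inj (adapted_basis_row_free j))/matrixP/(_ 0 k).
rewrite mul_mx_diag !mxE leNgt lt_fs mulr0 => /eqP.
by rewrite intr_eq0 => /eqP.
Qed.

Section LevelBlock.
Variable j0 : 'I_m.
Let level_rows := mask_mx (fun j => f j == f j0).
Let level_cols := mask_mx (fun k => sigma k == f j0).

(* A linear form killing the rows of the level block kills, by triangularity,
   every v_j with f j <= f j0, hence every e_k with sigma k <= f j0. *)
Lemma level_cols_sub : (level_cols <= level_rows *m coord_mx *m level_cols)%MS.
Proof.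
set B := _ *m level_cols; rewrite submxE; set Phi := cokermx B.
have B_Phi : B *m Phi = 0 by apply: mulmx_coker.
pose L := level_cols *m Phi.
have e_unit : e \in unitmx by rewrite -row_free_unit (adapted_basis_row_free j0).
have e_Psi : e *m (invmx e *m L) = L by rewrite mulKVmx.
have V_Psi : \matrix_(j < m) (if (f j <= f j0)%R then row j V else 0)
             *m (invmx e *m L) = 0.
  apply/row_matrixP => j; rewrite row_mul rowK row0.
  case: ifP => le_jj0; last by rewrite mul0mx.
  rewrite coord_mxP row_mul -mulmxA e_Psi /L mulmxA.
  suff -> : row j coord_mx *m level_cols = row j B by rewrite -row_mul B_Phi row0.
  apply/rowP => k; rewrite /B !mul_mx_diag mul_diag_mx !mxE.
  move: le_jj0; rewrite le_eqVlt => /orP[/eqP ->|lt_jj0]; first by rewrite eqxx mul1r.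
  have [eq_k|] := eqVneq (sigma k) (f j0); last by rewrite !mulr0.
  by rewrite adapted_coord_eq0 ?eq_k // !(mulr0, mul0r).
have [_ /andP[/submxP[Z def_E] _]] := adapted_span j0.
have mask_L : mask_mx (fun k => sigma k <= f j0) *m L = 0.
  by rewrite -e_Psi mulmxA -adapted_rows_mask def_E -mulmxA V_Psi mulmx0.
apply/eqP/matrixP => k l; rewrite mxE.
move/matrixP/(_ k l): mask_L; rewrite mul_diag_mx !mxE.
have [->|ne_k] := eqVneq (sigma k) (f j0); first by rewrite lexx mul1r.
by move=> _; apply: big1 => i _; rewrite !mxE (negbTE ne_k) mul0rn mul0r.
Qed.

Lemma level_block_surjective (C : numFieldType) (r : 'I_n -> C) :
  exists x : 'I_m -> C, (forall j, f j != f j0 -> x j = 0) /\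
    forall k, sigma k = f j0 -> \sum_j x j * (a j k)%:~R = r k.
Proof.
have [X0 def_cols] := submxP level_cols_sub.
pose X := X0 *m level_rows.
have X_supp k0 j : f j != f j0 -> X k0 j = 0.
  by move=> ne_j; rewrite /X mul_mx_diag !mxE (negbTE ne_j) mulr0.
have {}def_cols : level_cols = X *m coord_mx *m level_cols.
  by rewrite {1}def_cols /X !mulmxA.
clearbody X.
have X_coord k0 k : sigma k = f j0 ->
    \sum_j X k0 j * (a j k)%:~R = (k0 == k)%:R.
  move=> eq_k; move/matrixP/(_ k0 k): def_cols.
  rewrite mul_mx_diag !mxE eq_k eqxx mulr1.
  under [X in _ = X -> _]eq_bigr do rewrite mxE.
  by move=> <-; have [->|] := eqVneq k0 k; rewrite ?eq_k ?eqxx.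
exists (fun j => \sum_k0 r k0 * ratr (X k0 j)); split.
  by move=> j ne_j; apply: big1 => k0 _; rewrite X_supp // rmorph0 mulr0.
move=> k eq_k; under eq_bigr do rewrite mulr_suml.
rewrite exchange_big /=.
under eq_bigr => k0 _ do under eq_bigr => j _ do
  rewrite -mulrA -(ratr_int _ (a j k)) -rmorphM.
under eq_bigr => k0 _ do rewrite -mulr_sumr -rmorph_sum X_coord //.
rewrite (bigD1 k) //= eqxx rmorph1 mulr1 big1 ?addr0 // => k0 /negbTE ->.
by rewrite rmorph0 mulr0.
Qed.
End LevelBlock.
End AdaptedBasis.

Lemma exists_shift_nonzero (C : numFieldType) (I : finType) (x y : I -> C) :
  (forall i, y i != 0) -> exists b : C, forall i, x i + b * y i != 0.
Proof.
move=> y_neq0; pose S := \sum_i `|x i / y i|.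
exists (1 + S) => i; apply/eqP => /eqP; rewrite addr_eq0 => /eqP xi.
have : `|x i / y i| <= S by rewrite /S (bigD1 i) //= lerDl sumr_ge0.
have S_ge0 : 0 <= S by apply: sumr_ge0.
rewrite xi mulNr mulfK // normrN ger0_norm ?addr_ge0 //.
by rewrite gerDr ler10.
Qed.

Section Coarsening.
Variables (R : realFieldType) (C : numFieldType) (m n : nat).
Variables (f g : 'I_m -> R) (w : 'I_n -> 'I_m).
Variables (A : 'I_m -> 'I_n -> C) (Y : 'I_m -> C).
Hypothesis fine_coarse : forall j j', f j = f j' -> g j = g j'.
Hypothesis A_triangular : forall j k, f j < f (w k) -> A j k = 0.
Hypothesis A_level_onto : forall j0 (r : 'I_n -> C), exists x : 'I_m -> C,
  (forall j, f j != f j0 -> x j = 0) /\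
  forall k, f (w k) = f j0 -> \sum_j x j * A j k = r k.
Hypothesis Y_neq0 : forall j, Y j != 0.
Hypothesis Y_fine : forall k, \sum_(j | f j == f (w k)) A j k * Y j = 0.

Definition coarse_sum (z : 'I_m -> C) k := \sum_(j | g j == g (w k)) z j * A j k.

Lemma coarse_sum_level (x : 'I_m -> C) k :
  (forall j, f j != f (w k) -> x j = 0) -> coarse_sum x k = \sum_j x j * A j k.
Proof.
move=> x_supp; rewrite [RHS](bigID (fun j => g j == g (w k))) /=.
rewrite [X in _ = _ + X]big1 ?addr0 // => j ne_g; rewrite x_supp ?mul0r //.
by apply: contra ne_g => /eqP/fine_coarse ->.
Qed.

Lemma coarse_sum_below (x : 'I_m -> C) t k :
  (forall j, f j != t -> x j = 0) -> t < f (w k) -> coarse_sum x k = 0.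
Proof.
move=> x_supp lt_tk; apply: big1 => j _.
have [eq_jt|/x_supp ->] := eqVneq (f j) t; last by rewrite mul0r.
by rewrite A_triangular ?mulr0 ?eq_jt.
Qed.

Lemma coarse_sum_fine b k :
  coarse_sum (fun j => if f j == f (w k) then b * Y j else 0) k = 0.
Proof.
rewrite coarse_sum_level => [|j /negbTE -> //].
rewrite (bigID (fun j => f j == f (w k))) /= [X in _ + X]big1 => [|j /negbTE ->].
  under eq_bigr => j -> do rewrite mulrAC -mulrA.
  by rewrite -mulr_sumr Y_fine mulr0 addr0.
by rewrite mul0r.
Qed.

Definition solves_above (s : R) (z : 'I_m -> C) :=
  [/\ forall j, s < f j -> z j != 0, forall j, f j <= s -> z j = 0
    & forall k, s < f (w k) -> coarse_sum z k = 0].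

(* The values on the lowest level f j1 above s are chosen to cancel, through
   the onto level block, what the higher levels contribute to the equations
   of that level; adding b * Y on the level keeps these equations (by Y_fine)
   and makes all the values nonzero. *)
Lemma solves_above_extend s j1 (z : 'I_m -> C) :
  s < f j1 -> (forall j, s < f j -> f j1 <= f j) ->
  solves_above (f j1) z -> exists z', solves_above s z'.
Proof.
move=> lt_s1 min_j1 [z_neq0 z_eq0 z_eqs].
pose r k := - coarse_sum z k.
have [x [x_supp x_sol]] := A_level_onto j1 r.
have [b xb_neq0] := exists_shift_nonzero x Y_neq0.
pose y j := if f j == f j1 then b * Y j else 0.
exists (fun j => z j + x j + y j); split.
- move=> j /min_j1; rewrite le_eqVlt => /orP[/eqP eq_j|lt_j].
    by rewrite z_eq0 -?eq_j // add0r /y eq_j eqxx.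
  by rewrite x_supp ?(gt_eqF lt_j) // /y (gt_eqF lt_j) !addr0 z_neq0.
- move=> j le_js; have lt_j1 := le_lt_trans le_js lt_s1.
  by rewrite z_eq0 ?ltW // x_supp ?lt_eqF // /y lt_eqF // !addr0.
- move=> k lt_sk; have := min_j1 _ lt_sk; rewrite le_eqVlt => /orP[/eqP eq_k|lt_k].
    rewrite /coarse_sum; under eq_bigr do rewrite !mulrDl.
    rewrite !big_split /= -!/(coarse_sum _ k).
    rewrite (@coarse_sum_level x) => [|j]; last by rewrite -eq_k; apply: x_supp.
    by rewrite x_sol // /r addrN add0r /y eq_k coarse_sum_fine.
  rewrite /coarse_sum; under eq_bigr do rewrite !mulrDl.
  rewrite !big_split /= -!/(coarse_sum _ k) z_eqs //.
  rewrite (coarse_sum_below x_supp lt_k) (@coarse_sum_below y (f j1)) ?addr0 //.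
  by move=> j /negbTE ne_j; rewrite /y ne_j.
Qed.

Lemma solves_above_exists (N : nat) (s : R) :
  (#|[set j | (s < f j)%R]| <= N)%N -> exists z, solves_above s z.
Proof.
elim: N s => [|N IH] s card_above.
  exists (fun _ => 0); split=> // [j lt_sj|k lt_sk].
    by move: card_above; rewrite leqn0 => /eqP/cards0_eq/setP/(_ j); rewrite !inE lt_sj.
  move: card_above; rewrite leqn0 => /eqP/cards0_eq/setP/(_ (w k)).
  by rewrite !inE lt_sk.
case: (pickP (fun j => s < f j)) => [j0 lt_s0|none_above]; last first.
  exists (fun _ => 0); split=> // [j|k]; first by rewrite none_above.
  by rewrite none_above.
case: (@arg_minP _ _ _ j0 (fun j => s < f j) f lt_s0) => j1 lt_s1 min_j1.
suff [z z_above] : exists z, solves_above (f j1) z.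
  exact: solves_above_extend lt_s1 min_j1 z_above.
apply: IH; have sub : [set j | f j1 < f j] \subset [set j | s < f j] :\ j1.
  apply/subsetP => j; rewrite !inE => lt_1j; rewrite (lt_trans lt_s1 lt_1j) andbT.
  by apply: contraTneq lt_1j => ->; rewrite ltxx.
apply: leq_trans (subset_leq_card sub) _.
by move: card_above; rewrite (cardsD1 j1) inE lt_s1.
Qed.

Lemma coarse_solution :
  exists z : 'I_m -> C, (forall j, z j != 0) /\ forall k, coarse_sum z k = 0.
Proof.
pose s := - (1 + \sum_j `|f j|).
have lt_s j : s < f j.
  have le_sum : `|f j| <= \sum_i `|f i| by rewrite (bigD1 j) //= lerDl sumr_ge0.
  rewrite /s ltrNl; apply: le_lt_trans (ler_norm _) _; rewrite normrN.
  by apply: le_lt_trans le_sum _; rewrite ltrDr ltr01.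
have [|z [z_neq0 _ z_sol]] := @solves_above_exists m s.
  by rewrite -[m in (_ <= m)%N]card_ord max_card.
by exists z; split=> [j|k]; [apply: z_neq0 | apply: z_sol].
Qed.

End Coarsening.

Section RefinedOrder.
Variables (R : realDomainType) (T : finType) (f g : T -> R).
Hypothesis f_refines_g : forall x y, g x < g y -> f x < f y.

Lemma refined_eq x y : f x = f y -> g x = g y.
Proof.
move=> eq_f.
by have [/f_refines_g|/f_refines_g|//] := ltgtP (g x) (g y); rewrite eq_f ltxx.
Qed.

Lemma refined_le x0 : exists x1, forall x, (g x <= g x0) = (f x <= f x1).
Proof.
exists [arg max_(x1 > x0 | g x1 <= g x0) f x1]%O.
case: arg_maxP => // x1 le_10 max_x1 x; apply/idP/idP => [/max_x1 //|le_x1].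
rewrite leNgt; apply/negP => /(le_lt_trans le_10)/f_refines_g.
by rewrite ltNge le_x1.
Qed.

End RefinedOrder.

Section LeadingTermCoarsening.
Variables (R : realType) (n m : nat) (v : 'I_m -> 'I_n -> int).
Variables (lam lam' : 'I_m -> R) (u u' : 'I_n -> R).
Let g j := ell v lam j u.
Let f j := ell v lam' j u'.
Hypothesis ell_refined : forall j j', g j < g j' -> f j < f j'.

Lemma adapted_span_coarsen (sigma : 'I_n -> R) (w : 'I_n -> 'I_m) (e : 'M[rat]_n) :
  (forall k, sigma k = f (w k)) ->
  (forall j0, let t := f j0 in
    \rank (\matrix_(k < n) (if (sigma k <= t)%R then row k e else 0))
      = #|[set k : 'I_n | sigma k <= t]|
    /\ (\matrix_(k < n) (if (sigma k <= t)%R then row k e else 0) ==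
        \matrix_(j < m) (if (f j <= t)%R then row j (vmat v) else 0))%MS) ->
  forall j0, let t := g j0 in
    \rank (\matrix_(k < n) (if (g (w k) <= t)%R then row k e else 0))
      = #|[set k : 'I_n | g (w k) <= t]|
    /\ (\matrix_(k < n) (if (g (w k) <= t)%R then row k e else 0) ==
        \matrix_(j < m) (if (g j <= t)%R then row j (vmat v) else 0))%MS.
Proof.
move=> sigma_w adapted_span j0 /=.
have [j1 le_j0] := refined_le ell_refined j0.
have -> : \matrix_(k < n) (if (g (w k) <= g j0)%R then row k e else 0) =
          \matrix_(k < n) (if (sigma k <= f j1)%R then row k e else 0).
  by apply/row_matrixP => k; rewrite !rowK le_j0 sigma_w.
have -> : \matrix_(j < m) (if (g j <= g j0)%R then row j (vmat v) else 0) =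
          \matrix_(j < m) (if (f j <= f j1)%R then row j (vmat v) else 0).
  by apply/row_matrixP => j; rewrite !rowK le_j0.
have -> : [set k | g (w k) <= g j0] = [set k | sigma k <= f j1].
  by apply/setP => k; rewrite !inE le_j0 sigma_w.
exact: adapted_span.
Qed.

Lemma lte_solvable_coarsen :
  lte_solvable v lam' u' (fun _ => 1) -> strongly_bulk_balanced v lam u.
Proof.
move=> [sigma [e [a [y [sigma_level adapted_span adapted_coords y_neq0 lte]]]]].
have [w sigma_w] := fin_all_exists sigma_level.
have {}sigma_w k : sigma k = f (w k) := sigma_w k.
pose Y j := \prod_(k < n) (y k ^ a j k).
have Y_neq0 j : Y j != 0.
  by rewrite prodf_seq_neq0; apply/allP => k _; apply: expfz_neq0.
have [z [z_neq0 z_sol]] : exists z : 'I_m -> R[i],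
    (forall j, z j != 0) /\ forall k, coarse_sum g w (fun j k => (a j k)%:~R) z k = 0.
  apply: (@coarse_solution R _ m n f g w _ Y (refined_eq ell_refined) _ _ Y_neq0).
  - move=> j k; rewrite -sigma_w.
    by move/(adapted_coord_eq0 sigma_level adapted_span adapted_coords) ->.
  - move=> j0 r; have [x [x_supp x_sol]] :=
      level_block_surjective sigma_level adapted_span adapted_coords j0 r.
    by exists x; split=> // k; rewrite -sigma_w; apply: x_sol.
  - move=> k; rewrite -sigma_w -[RHS](lte k).
    by apply: eq_bigr => j _; rewrite mul1r.
exists (fun j => z j / Y j); split=> [j|]; first by rewrite mulf_neq0 ?invr_eq0.
exists (fun k => g (w k)), e, a, y; split=> //.
- by move=> k; exists (w k).
- exact: adapted_span_coarsen sigma_w adapted_span.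
- move=> k; rewrite -[RHS](z_sol k); apply: eq_bigr => j _.
  by rewrite mulrAC divfK.
Qed.

End LeadingTermCoarsening.

Theorem theoremB (R : realType) (n m : nat) (v : 'I_m -> 'I_n -> int)
  (lam : 'I_m -> R) (u : 'I_n -> R) :
  moment_polytope v lam -> inInt v lam u ->
  bulk_balanced v lam u -> strongly_bulk_balanced v lam u.
Proof.
move=> _ _ [lams [us [_ lams_cvg _ us_cvg lte]]].
have [N ell_order] := eventually_ell_order v lams_cvg us_cvg.
exact: lte_solvable_coarsen (ell_order N (leqnn N)) (lte N).2.
Qed.
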